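(* Let $R$ be a commutative ring with identity and $M$ a non-zero comultiplication $R$-module with $G'(M)$ non-null. Then $G'(M)$ is not a complete $n$-partite graph for any integer $n\ge 2$.
   Context: An $R$-module $M$ is a comultiplication module if for every submodule $N$ of $M$ there is an ideal $I$ of $R$ with $N=\mathrm{Ann}_M(I)$. A submodule $N$ of $M$ is large if $N\cap L\neq 0$ for every non-zero submodule $L$ of $M$. The large sum graph $G'(M)$ has as vertex set the set of all non-zero non-large submodules of $M$, and two distinct vertices $N,K$ are adjacent iff $N+K$ is non-large in $M$. A complete $n$-partite graph is one whose vertex set is partitioned into $n$ non-empty parts such that two vertices are adjacent iff they lie in different parts. *)

From HB Require Import structures.
From mathcomp Require Import all_boot all_order all_algebra.
Set Implicit Arguments. Unset Strict Implicit. Unset Printing Implicit Defensive.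
Import GRing.Theory.
Local Open Scope ring_scope.

Section Defs.
Variables (R : comPzRingType) (M : lmodType R).

Definition submodule (N : M -> Prop) : Prop :=
  [/\ N 0, (forall x y, N x -> N y -> N (x + y)) & (forall (r : R) x, N x -> N (r *: x))].

Definition ideal (I : R -> Prop) : Prop :=
  [/\ I 0, (forall a b, I a -> I b -> I (a + b)) & (forall r a, I a -> I (r * a))].

Definition annM (I : R -> Prop) : M -> Prop := fun m => forall r, I r -> r *: m = 0.

Definition same_set (N K : M -> Prop) : Prop := forall x, N x <-> K x.

Definition comultiplication_module : Prop :=
  forall N, submodule N -> exists I, ideal I /\ same_set N (annM I).

Definition nonzero_set (N : M -> Prop) : Prop := exists x, N x /\ x <> 0.

Definition large (N : M -> Prop) : Prop :=
  submodule N /\ forall L, submodule L -> nonzero_set L -> nonzero_set (fun x => N x /\ L x).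

Definition sum_set (N K : M -> Prop) : M -> Prop :=
  fun x => exists a b, [/\ N a, K b & x = a + b].

Definition lsg_vertex (N : M -> Prop) : Prop :=
  [/\ submodule N, nonzero_set N & ~ large N].

Definition lsg_adj (N K : M -> Prop) : Prop :=
  [/\ lsg_vertex N, lsg_vertex K, ~ same_set N K & ~ large (sum_set N K)].

Definition lsg_nonnull : Prop := exists N K, lsg_adj N K.

(* G'(M) is complete n-partite: its vertex set is partitioned into n non-empty
   parts (given by a part-labelling [part], invariant under equality of
   submodules), two vertices being adjacent iff they lie in different parts. *)
Definition lsg_complete_npartite (n : nat) : Prop :=
  exists part : (M -> Prop) -> 'I_n,
    [/\ (forall N K, lsg_vertex N -> lsg_vertex K -> same_set N K -> part N = part K),
        (forall i : 'I_n, exists N, lsg_vertex N /\ part N = i)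
      & (forall N K, lsg_vertex N -> lsg_vertex K -> ~ same_set N K ->
           (lsg_adj N K <-> part N <> part K))].
End Defs.

(** If [X] is strictly contained in another vertex [Z], then [X + Y] is
    non-large for every vertex [Y]: otherwise [X] and [Y] would share a part,
    so would [Z] and [Y] (as [X + Y] is contained in [Z + Y]), whereas [X]
    and [Z] are adjacent.  An edge [N -- K] yields such an [X] inside [N + K].
    Members of a strict chain of vertices are pairwise adjacent, so with
    finitely many parts every such chain is finite and [X] lies in a maximal
    vertex [W].  As [W] is not large, some nonzero submodule [L] meets [W]
    trivially; [L] is strictly contained in the vertex [X + L], hence
    [L + W] is non-large, so [L] is contained in [W] by maximality, which
    contradicts [L] being nonzero. *)
From HB Require Import structures.
From mathcomp Require Import all_boot all_order all_algebra.
From Stdlib Require Import Classical ClassicalEpsilon.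

Set Implicit Arguments. Unset Strict Implicit. Unset Printing Implicit Defensive.

Import GRing.Theory.
Local Open Scope ring_scope.

Section Submodules.
Variables (R : comPzRingType) (M : lmodType R).
Implicit Types N K L W X Y Z : M -> Prop.

Definition sub_set N K := forall x, N x -> K x.

Definition proper_set N K := sub_set N K /\ ~ same_set N K.

Lemma submodule_sum N K : submodule N -> submodule K -> submodule (sum_set N K).
Proof.
case=> N0 ND NZ [K0 KD KZ]; split.
- by exists 0, 0; rewrite addr0.
- move=> _ _ [a [b [Na Kb ->]]] [c [d [Nc Kd ->]]].
  by exists (a + c), (b + d); rewrite addrACA; split; [apply: ND|apply: KD|].
- move=> r _ [a [b [Na Kb ->]]].
  by exists (r *: a), (r *: b); rewrite scalerDr; split; [apply: NZ|apply: KZ|].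
Qed.

Lemma sub_suml N K : submodule K -> sub_set N (sum_set N K).
Proof. by case=> K0 _ _ x Nx; exists x, 0; rewrite addr0. Qed.

Lemma sub_sumr N K : submodule N -> sub_set K (sum_set N K).
Proof. by case=> N0 _ _ x Kx; exists 0, x; rewrite add0r. Qed.

Lemma sum_sub X Y Z : sub_set X Z -> sub_set Y Z -> submodule Z ->
  sub_set (sum_set X Y) Z.
Proof. by move=> XZ YZ [_ ZD _] _ [a [b [Xa Yb ->]]]; apply: ZD; [apply: XZ|apply: YZ]. Qed.

Lemma sum_subl X Z Y : sub_set X Z -> sub_set (sum_set X Y) (sum_set Z Y).
Proof. by move=> XZ _ [a [b [Xa Yb ->]]]; exists a, b; split=> //; apply: XZ. Qed.

Lemma large_sub N K : large N -> sub_set N K -> submodule K -> large K.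
Proof.
case=> _ lN NK sK; split=> // L sL nzL.
have [x [[Nx Lx] x0]] := lN L sL nzL.
by exists x; split=> //; split=> //; apply: NK.
Qed.

Lemma not_large_disjoint W : submodule W -> ~ large W ->
  exists L, [/\ submodule L, nonzero_set L & forall x, W x -> L x -> x = 0].
Proof.
move=> sW nlW; apply: NNPP => noL; apply: nlW; split=> // L sL nzL.
apply: NNPP => nWL; apply: noL; exists L; split=> // x Wx Lx.
by apply: NNPP => x0; apply: nWL; exists x.
Qed.

Lemma disjoint_not_large W L : submodule W -> nonzero_set W ->
  (forall x, W x -> L x -> x = 0) -> ~ large L.
Proof.
move=> sW nzW WL0 [_ lL]; have [x [[Lx Wx] x0]] := lL W sW nzW.
by apply: x0; apply: WL0.
Qed.

Lemma lsg_vertex_sum X Y : submodule X -> lsg_vertex Y -> ~ large (sum_set X Y) ->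
  lsg_vertex (sum_set X Y).
Proof.
move=> sX [sY [y [Yy y0]] _] nl; split=> //; first exact: submodule_sum.
by exists y; split=> //; apply: sub_sumr.
Qed.

Section CompletePartite.
Variables (n : nat) (part : (M -> Prop) -> 'I_n).
Hypothesis part_same : forall N K, lsg_vertex N -> lsg_vertex K ->
  same_set N K -> part N = part K.
Hypothesis adj_part : forall N K, lsg_vertex N -> lsg_vertex K -> ~ same_set N K ->
  (lsg_adj N K <-> part N <> part K).

Lemma part_eq_large_sum X Y : lsg_vertex X -> lsg_vertex Y ->
  large (sum_set X Y) -> part X = part Y.
Proof.
move=> vX vY lXY; have [XY|nXY] := classic (same_set X Y); first exact: part_same.
by apply: NNPP => /(proj2 (adj_part vX vY nXY)) [].
Qed.

Lemma part_neq_proper X Z : lsg_vertex X -> lsg_vertex Z -> proper_set X Z ->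
  part X <> part Z.
Proof.
move=> vX vZ [XZ nXZ]; apply/(adj_part vX vZ nXZ); split=> // lXZ.
have [sZ _ nlZ] := vZ; apply: nlZ.
exact: large_sub lXZ (sum_sub XZ (fun _ => id) sZ) sZ.
Qed.

Lemma proper_sum_not_large X Z Y : lsg_vertex X -> lsg_vertex Z -> lsg_vertex Y ->
  proper_set X Z -> ~ large (sum_set X Y).
Proof.
move=> vX vZ vY XZ lXY; apply: (part_neq_proper vX vZ XZ).
have lZY : large (sum_set Z Y).
  apply: large_sub lXY (sum_subl XZ.1) _.
  by apply: submodule_sum; [case: vZ|case: vY].
by rewrite (part_eq_large_sum vX vY lXY) (part_eq_large_sum vZ vY lZY).
Qed.

Lemma no_infinite_strict_chain (s : nat -> M -> Prop) :
  (forall k, lsg_vertex (s k)) -> ~ (forall k, proper_set (s k) (s k.+1)).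
Proof.
move=> vs chain.
have mono i j : (i <= j)%N -> sub_set (s i) (s j).
  move=> /subnK <-; elim: (j - i)%N => // k IH x /IH.
  exact: (chain (k + i)%N).1.
have strict i j : (i < j)%N -> proper_set (s i) (s j).
  move=> lij; split; first exact/mono/ltnW.
  move=> sij; apply: (chain i).2 => x; split; first exact: (chain i).1.
  by move=> /(mono _ _ lij) /sij.
have part_inj : injective (fun i : 'I_n.+1 => part (s i)).
  move=> i j pij; apply: val_inj; case: (ltngtP i j) => // ij.
  - by have := part_neq_proper (vs _) (vs _) (strict _ _ ij).
  - by have := part_neq_proper (vs _) (vs _) (strict _ _ ij); rewrite pij.
by have := leq_card _ part_inj; rewrite !card_ord ltnn.
Qed.

Definition maximal_vertex W :=
  lsg_vertex W /\ forall V, lsg_vertex V -> sub_set W V -> same_set W V.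

Lemma exists_maximal_vertex X : lsg_vertex X ->
  exists W, maximal_vertex W /\ sub_set X W.
Proof.
move=> vX; apply: NNPP => noW.
have grow W : lsg_vertex W -> sub_set X W ->
    exists V, [/\ lsg_vertex V, sub_set X V & proper_set W V].
  move=> vW XW; apply: NNPP => noV; apply: noW; exists W; split=> //.
  split=> // V vV WV; apply: NNPP => nWV; apply: noV; exists V; split=> //.
  by move=> x /XW /WV.
pose P W V := [/\ lsg_vertex V, sub_set X V & proper_set W V].
pose g W := epsilon (inhabits W) (P W).
have gP W : lsg_vertex W -> sub_set X W -> P W (g W).
  by move=> vW XW; apply: epsilon_spec; apply: grow.
pose s k := iter k g X.
have sP k : lsg_vertex (s k) /\ sub_set X (s k).
  by elim: k => [|k [vk Xk]]; [split|case: (gP _ vk Xk)].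
apply: (no_infinite_strict_chain (fun k => (sP k).1)) => k.
by case: (gP _ (sP k).1 (sP k).2).
Qed.

Lemma maximal_vertex_sum W Y : maximal_vertex W -> submodule Y ->
  ~ large (sum_set Y W) -> sub_set Y W.
Proof.
move=> [vW maxW] sY nl x Yx.
have WYW := maxW _ (lsg_vertex_sum sY vW nl) (sub_sumr (K := W) sY).
by apply/WYW; apply: sub_suml Yx; case: vW.
Qed.

Lemma lsg_adj_proper_subvertex N K : lsg_adj N K ->
  exists X, lsg_vertex X /\ exists2 Z, lsg_vertex Z & proper_set X Z.
Proof.
move=> [vN vK nNK nl]; have [sN _ _] := vN; have [sK _ _] := vK.
have vNK : lsg_vertex (sum_set N K) by apply: lsg_vertex_sum.
have [NNK|nNNK] := classic (same_set N (sum_set N K)); last first.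
  by exists N; split=> //; exists (sum_set N K) => //; split=> //; apply: sub_suml.
exists K; split=> //; exists (sum_set N K) => //; split; first exact: sub_sumr.
by move=> KNK; apply: nNK => x; rewrite NNK KNK.
Qed.

Lemma complete_partite_null : ~ lsg_nonnull M.
Proof.
move=> [N [K /lsg_adj_proper_subvertex [X [vX [Z vZ XZ]]]]].
have [W [maxW XW]] := exists_maximal_vertex vX.
have [vW _] := maxW; have [[sX nzX _] [sW nzW nlW]] := (vX, vW).
have [L [sL [l [Ll l0]] WL0]] := not_large_disjoint sW nlW.
have vL : lsg_vertex L.
  by split=> //; [exists l|apply: disjoint_not_large WL0].
have vXL : lsg_vertex (sum_set X L).
  by apply: lsg_vertex_sum => //; apply: proper_sum_not_large vX vZ vL XZ.
have LXL : proper_set L (sum_set X L).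
  split; first exact: sub_sumr.
  move: nzX => [x [Xx x0]] LXL; apply: x0; apply: WL0; first exact: XW.
  by apply/LXL; apply: sub_suml.
have LW := maximal_vertex_sum maxW sL (proper_sum_not_large vL vXL vW LXL).
by apply: l0; apply: WL0 => //; apply: LW.
Qed.

End CompletePartite.
End Submodules.

Theorem theorem2p10 (R : comPzRingType) (M : lmodType R) :
  (exists x : M, x <> 0%R) ->
  comultiplication_module M ->
  lsg_nonnull M ->
  forall n : nat, (2 <= n)%N -> ~ lsg_complete_npartite M n.
Proof.
move=> _ _ nonnull n _ [part [part_same _ adj_part]].
exact: complete_partite_null part_same adj_part nonnull.
Qed.
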